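(* Let $S$ be an inductive left $E$-monoid with left $E$-modal operation $\cdot$, and for $s\in S$, $e\in E$ put $s^e=(s\cdot e)s$. Then for all $s,t\in S$ and $e,f\in E$: (ZS1) $(st)\cdot e=s\cdot(t\cdot e)$; (ZS2) $s\cdot(e\wedge f)=(s\cdot e)\wedge(s^e\cdot f)$; (ZS4) $(st)^e=s^{t\cdot e}t^e$. Moreover (ZS3) $(s^e)^f=s^{e\wedge f}$ holds for all $s\in S$, $e,f\in E$ if and only if $E$ has definable meets. In that case the operation $(e,s)\otimes(f,t)=(e\wedge(s\cdot f),(s\cdot f)st)$ on $E\times S$ is associative (giving the Zappa-Szép product $E\bowtie S$), $Rest(E,S)$ is a subsemigroup of $E\bowtie S$ (its multiplication being the restriction of $\otimes$), $\hat E=\{(e,e)\mid e\in E\}$ is a semilattice under $\otimes$ isomorphic to $(E,\wedge)$, and every subsemigroup $T$ of $E\bowtie S$ which is a left restriction semigroup under some unary operation $D$ with $D(T)=\hat E$ is contained in $Rest(E,S)$.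
   Context: For a semigroup $S$, $E(S)$ is its set of idempotents; for $e,f\in E(S)$, $e\le_r f$ iff $e=ef$. $E\subseteq E(S)$ is right pre-reduced if $e=ef$ and $f=fe$ imply $e=f$ for $e,f\in E$. Let $S$ be a monoid and $1\in E\subseteq E(S)$. $S$ is an inductive left $E$-monoid if $E$ is right pre-reduced, $(E,\le_r)$ is a meet-semilattice with meet $\wedge$, and (I1') for all $t\in S$, $e\in E$ there is $t\cdot e\in E$ such that for all $s\in S$: $ste=st$ iff $s(t\cdot e)=s$ (the necessarily unique map $(t,e)\mapsto t\cdot e$ is the left $E$-modal operation); (I2') for $s\in S$, $e,f\in E$: $se=sf=s$ implies $s(e\wedge f)=s$. Such $S$ has definable meets if $(e\cdot f)e\in E$ for all $e,f\in E$. $Rest(E,S)$ is the set $\{(e,s)\in E\times S\mid es=s\}$ with multiplication $(e,s)(f,t)=(e\wedge(s\cdot f),(e\wedge(s\cdot f))st)$ and $D((e,s))=(e,e)$. A left restriction semigroup is a semigroup with unary $D$ satisfying $D(x)x=x$, $D(x)D(y)=D(y)D(x)$, $D(D(x)y)=D(x)D(y)$, $xD(y)=D(xy)x$; $D(T)=\{D(x)\mid x\in T\}$. *)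

Set Implicit Arguments.

Section Defs.
Variables (S : Type) (mul : S -> S -> S) (one : S).
Local Infix "*" := mul.

Definition is_monoid : Prop :=
  (forall x y z, x * (y * z) = (x * y) * z) /\
  (forall x, one * x = x) /\ (forall x, x * one = x).

Definition idempotent (e : S) : Prop := e * e = e.

Definition le_r (e f : S) : Prop := e = e * f.

Definition right_pre_reduced (E : S -> Prop) : Prop :=
  forall e f, E e -> E f -> e = e * f -> f = f * e -> e = f.

Definition is_meet_of (E : S -> Prop) (meet : S -> S -> S) : Prop :=
  forall e f, E e -> E f ->
    E (meet e f) /\ le_r (meet e f) e /\ le_r (meet e f) f /\
    (forall g, E g -> le_r g e -> le_r g f -> le_r g (meet e f)).

Definition is_left_E_modal (E : S -> Prop) (dot : S -> S -> S) : Prop :=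
  forall t e, E e ->
    E (dot t e) /\ (forall s, (s * t) * e = s * t <-> s * dot t e = s).

Definition inductive_left_E_monoid (E : S -> Prop) (meet dot : S -> S -> S)
  : Prop :=
  is_monoid /\ E one /\ (forall e, E e -> idempotent e) /\
  right_pre_reduced E /\ is_meet_of E meet /\ is_left_E_modal E dot /\
  (forall s e f, E e -> E f -> s * e = s -> s * f = s -> s * meet e f = s).

Definition definable_meets (E : S -> Prop) (dot : S -> S -> S) : Prop :=
  forall e f, E e -> E f -> E (dot e f * e).

Definition sup (dot : S -> S -> S) (s e : S) : S := dot s e * s.

Definition otimes (meet dot : S -> S -> S) (x y : S * S) : S * S :=
  (meet (fst x) (dot (snd x) (fst y)), dot (snd x) (fst y) * snd x * snd y).

Definition in_ExS (E : S -> Prop) (x : S * S) : Prop := E (fst x).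

Definition in_Rest (E : S -> Prop) (x : S * S) : Prop :=
  E (fst x) /\ fst x * snd x = snd x.

Definition rest_mul (meet dot : S -> S -> S) (x y : S * S) : S * S :=
  let g := meet (fst x) (dot (snd x) (fst y)) in (g, g * snd x * snd y).

Definition in_Ehat (E : S -> Prop) (x : S * S) : Prop :=
  exists e, E e /\ x = (e, e).

Definition left_restriction_on (T : S * S -> Prop)
  (op : S * S -> S * S -> S * S) (D : S * S -> S * S) : Prop :=
  (forall x, T x -> T (D x)) /\
  (forall x, T x -> op (D x) x = x) /\
  (forall x y, T x -> T y -> op (D x) (D y) = op (D y) (D x)) /\
  (forall x y, T x -> T y -> D (op (D x) y) = op (D x) (D y)) /\
  (forall x y, T x -> T y -> op x (D y) = op (D (op x y)) x).
End Defs.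

From Stdlib Require Import Setoid.

(* Every idempotent of E is determined by the set of elements it fixes on the
   right ([E_eq_of_fixers], a consequence of right pre-reducedness), and both
   the meet and the modal operation have a clean description in these terms:
   u (e /\ f) = u  iff  u e = u and u f = u        ([meet_fix]),
   u (t . e) = u   iff  u t e = u t               ([dot_fix]).
   Hence every identity between elements of E is proved by comparing fixers:
   this gives (ZS1), the distributivity s.(e/\f) = s.e /\ s.f, the absorption
   e /\ (e.f) = e /\ f and, when (e.f)e lies in E, (e.f)e = e /\ f.  Assuming definable meets, (e.f)e = e /\ f for all e, f,
   and the statements about the Zappa-Szep product E x S, Rest(E,S), the
   diagonal E^ and left restriction subsemigroups are computations with this
   identity. *)

Section InductiveLeftEMonoid.
Context {S : Type} {mul : S -> S -> S} {one : S} {E : S -> Prop}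
  {meet dot : S -> S -> S}.
Hypothesis HS : inductive_left_E_monoid mul one E meet dot.
Local Infix "*" := mul.

Lemma mulA x y z : x * (y * z) = x * y * z.
Proof. destruct HS as [[assoc _] _]; apply assoc. Qed.

Lemma mulr1 x : x * one = x.
Proof. destruct HS as [[_ [_ idr]] _]; apply idr. Qed.

Lemma E_idem e : E e -> e * e = e.
Proof. destruct HS as [_ [_ [idem _]]]; apply idem. Qed.

Lemma E_meet e f : E e -> E f -> E (meet e f).
Proof. destruct HS as [_ [_ [_ [_ [Hm _]]]]]; intros He Hf; apply Hm; auto. Qed.

Lemma E_dot t e : E e -> E (dot t e).
Proof. destruct HS as [_ [_ [_ [_ [_ [Hd _]]]]]]; intro He; apply Hd; auto. Qed.

Lemma dot_fix t e u : E e -> (u * dot t e = u <-> u * t * e = u * t).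
Proof.
  destruct HS as [_ [_ [_ [_ [_ [Hd _]]]]]]; intro He.
  symmetry; apply (Hd t e He).
Qed.

Lemma E_eq_of_fixers g g' : E g -> E g' ->
  (forall u, u * g = u <-> u * g' = u) -> g = g'.
Proof.
  destruct HS as [_ [_ [_ [rpr _]]]]; intros Hg Hg' Hfix.
  apply rpr; auto; symmetry; apply Hfix, E_idem; auto.
Qed.

Lemma meet_fix e f u : E e -> E f ->
  (u * meet e f = u <-> u * e = u /\ u * f = u).
Proof.
  destruct HS as [_ [_ [_ [_ [Hm [_ I2]]]]]]; intros He Hf.
  destruct (Hm e f He Hf) as [_ [le_e [le_f _]]]; unfold le_r in le_e, le_f.
  split.
  - intro Hu; split.
    + rewrite <- Hu at 1; rewrite <- mulA, <- le_e; exact Hu.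
    + rewrite <- Hu at 1; rewrite <- mulA, <- le_f; exact Hu.
  - intros [Hue Huf]; apply I2; auto.
Qed.

Lemma meet_mul_r e f : E e -> E f -> meet e f * f = meet e f.
Proof.
  intros He Hf; apply (meet_fix e f _ He Hf), E_idem, E_meet; auto.
Qed.

Lemma dot_mul_fix t e : E e -> dot t e * t * e = dot t e * t.
Proof. intro He; apply dot_fix, E_idem, E_dot; auto. Qed.

Lemma meetA e f g : E e -> E f -> E g -> meet (meet e f) g = meet e (meet f g).
Proof.
  intros He Hf Hg; apply E_eq_of_fixers; auto using E_meet; intro u.
  rewrite !meet_fix; auto using E_meet; tauto.
Qed.

Lemma meetC e f : E e -> E f -> meet e f = meet f e.
Proof.
  intros He Hf; apply E_eq_of_fixers; auto using E_meet; intro u.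
  rewrite !meet_fix; auto; tauto.
Qed.

Lemma meetI e : E e -> meet e e = e.
Proof.
  intro He; apply E_eq_of_fixers; auto using E_meet; intro u.
  rewrite meet_fix; auto; tauto.
Qed.

Lemma dot_one e : E e -> dot one e = e.
Proof.
  intro He; apply E_eq_of_fixers; auto using E_dot; intro u.
  rewrite dot_fix, mulr1; auto; tauto.
Qed.

Lemma dot_mul s t e : E e -> dot (s * t) e = dot s (dot t e).
Proof.
  intro He; apply E_eq_of_fixers; auto using E_dot; intro u.
  rewrite !dot_fix, mulA; auto using E_dot; tauto.
Qed.

Lemma dot_meet_distr s e f : E e -> E f ->
  dot s (meet e f) = meet (dot s e) (dot s f).
Proof.
  intros He Hf; apply E_eq_of_fixers; auto using E_dot, E_meet; intro u.
  rewrite dot_fix, !meet_fix, !dot_fix; auto using E_dot, E_meet; tauto.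
Qed.

Lemma meet_dot_self e f : E e -> E f -> meet e (dot e f) = meet e f.
Proof.
  intros He Hf; apply E_eq_of_fixers; auto using E_dot, E_meet; intro u.
  rewrite !meet_fix, dot_fix; auto using E_dot.
  split; intros [Hue Huf]; split; auto.
  - rewrite Hue in Huf; exact Huf.
  - rewrite Hue; exact Huf.
Qed.

Lemma dot_mul_meet e f : E e -> E f -> E (dot e f * e) ->
  dot e f * e = meet e f.
Proof.
  intros He Hf Hx; apply E_eq_of_fixers; auto using E_meet; intro u.
  rewrite meet_fix; auto; split.
  - intro Hu; split.
    + rewrite <- Hu at 1; rewrite <- !mulA, E_idem; auto; rewrite mulA; exact Hu.
    + rewrite <- Hu at 1; rewrite <- mulA, dot_mul_fix; auto.
  - intros [Hue Huf].
    assert (Hud : u * dot e f = u) by (apply dot_fix; auto; rewrite Hue, Huf; auto).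
    rewrite mulA, Hud, Hue; reflexivity.
Qed.

Lemma dot_meet s e f : E e -> E f ->
  dot s (meet e f) = meet (dot s e) (dot (sup mul dot s e) f).
Proof.
  intros He Hf; unfold sup.
  rewrite dot_mul, meet_dot_self, dot_meet_distr; auto using E_dot.
Qed.

Lemma sup_mul s t e : E e ->
  sup mul dot (s * t) e = sup mul dot s (dot t e) * sup mul dot t e.
Proof.
  intro He; unfold sup.
  rewrite dot_mul, !mulA, dot_mul_fix; auto using E_dot.
Qed.

Lemma sup_sup_iff_definable_meets :
  (forall s e f, E e -> E f ->
     sup mul dot (sup mul dot s e) f = sup mul dot s (meet e f))
  <-> definable_meets mul E dot.
Proof.
  split.
  - intros ZS3 e f He Hf.
    specialize (ZS3 one e f He Hf); unfold sup in ZS3.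
    rewrite dot_one, !mulr1, dot_one in ZS3; auto using E_meet.
    rewrite ZS3; apply E_meet; auto.
  - intros HDM s e f He Hf; unfold sup.
    rewrite dot_mul, mulA, dot_mul_meet, dot_meet_distr; auto using E_dot.
Qed.

Section DefinableMeets.
Hypothesis HDM : definable_meets mul E dot.

Lemma dot_mul_meet_dm e f : E e -> E f -> dot e f * e = meet e f.
Proof. intros He Hf; apply dot_mul_meet; auto; apply HDM; auto. Qed.

Lemma otimes_ExS x y : in_ExS E x -> in_ExS E y ->
  in_ExS E (otimes mul meet dot x y).
Proof.
  destruct x as [e s], y as [f t]; unfold in_ExS; simpl; intros He Hf.
  apply E_meet; auto using E_dot.
Qed.

(* Associativity of the Zappa-Szep product: both bracketings of
   (e,s)(f,t)(g,u) equal (e /\ s.f /\ s.(t.g), (s.f /\ s.(t.g)) s t u). *)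
Lemma otimes_assoc x y z : in_ExS E x -> in_ExS E y -> in_ExS E z ->
  otimes mul meet dot (otimes mul meet dot x y) z =
  otimes mul meet dot x (otimes mul meet dot y z).
Proof.
  destruct x as [e s], y as [f t], z as [g u]; unfold in_ExS, otimes; simpl.
  intros He Hf Hg.
  assert (Hsf : E (dot s f)) by (apply E_dot; auto).
  assert (Hstg : E (dot s (dot t g))) by (apply E_dot, E_dot; auto).
  assert (Hleft : dot (dot s f * s * t) g = dot (dot s f) (dot s (dot t g)))
    by (rewrite !dot_mul; auto using E_dot).
  assert (Hm : meet (dot s f) (dot s (dot t g)) * s * dot t g =
               meet (dot s f) (dot s (dot t g)) * s).
  { apply (dot_fix s (dot t g)); [apply E_dot | apply meet_mul_r]; auto. }
  rewrite Hleft, dot_meet_distr, meetA, meet_dot_self; auto using E_dot.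
  f_equal.
  rewrite !mulA, dot_mul_meet_dm, Hm; auto.
Qed.

(* Rest(E,S) is closed under the Zappa-Szep product, which restricts to its
   multiplication: for e s = s one has e /\ s.f = (s.f) e. *)
Lemma otimes_Rest x y : in_Rest mul E x -> in_Rest mul E y ->
  in_Rest mul E (otimes mul meet dot x y) /\
  rest_mul mul meet dot x y = otimes mul meet dot x y.
Proof.
  destruct x as [e s], y as [f t]; unfold in_Rest, otimes, rest_mul; simpl.
  intros [He Hes] [Hf _].
  assert (Hsf : E (dot s f)) by (apply E_dot; auto).
  assert (Hmeet : meet e (dot s f) = dot s f * e).
  { assert (Hdot : dot e (dot s f) = dot s f)
      by (rewrite <- dot_mul, Hes; auto).
    rewrite <- Hdot at 1; rewrite meet_dot_self, <- dot_mul_meet_dm, Hdot; auto. }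
  assert (Hms : meet e (dot s f) * s = dot s f * s)
    by (rewrite Hmeet, <- mulA, Hes; reflexivity).
  split; [split|].
  - apply E_meet; auto.
  - rewrite !mulA, meet_mul_r, Hms; auto.
  - rewrite Hms; reflexivity.
Qed.

Lemma otimes_diag e f : E e -> E f ->
  otimes mul meet dot (e, e) (f, f) = (meet e f, meet e f).
Proof.
  intros He Hf; unfold otimes; simpl.
  rewrite meet_dot_self, dot_mul_meet_dm, meet_mul_r; auto.
Qed.

Lemma Ehat_semilattice x y : in_Ehat E x -> in_Ehat E y ->
  in_Ehat E (otimes mul meet dot x y) /\
  otimes mul meet dot x x = x /\
  otimes mul meet dot x y = otimes mul meet dot y x.
Proof.
  intros [e [He ->]] [f [Hf ->]].
  rewrite !otimes_diag, meetI, (meetC e f); auto.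
  split; [exists (meet f e); split; auto using E_meet | auto].
Qed.

(* A left restriction subsemigroup of E x S with D(T) = E^ lies in Rest(E,S):
   if D(e,s) = (g,g) then (g,g)(e,s) = (e,s) forces e = g /\ e and s = e s. *)
Lemma left_restriction_in_Rest (T : S * S -> Prop) (D : S * S -> S * S) :
  (forall x, T x -> in_ExS E x) ->
  left_restriction_on T (otimes mul meet dot) D ->
  (forall x, (exists y, T y /\ x = D y) -> in_Ehat E x) ->
  forall x, T x -> in_Rest mul E x.
Proof.
  intros HT [_ [HDx _]] HD x Tx.
  destruct (HD (D x) (ex_intro _ x (conj Tx eq_refl))) as [g [Hg Dx]].
  pose proof (HDx x Tx) as Hx; rewrite Dx in Hx.
  pose proof (HT x Tx) as He.
  destruct x as [e s]; unfold in_ExS, otimes in *; simpl in *.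
  injection Hx as He_meet Hs.
  rewrite meet_dot_self in He_meet; auto.
  rewrite dot_mul_meet_dm, He_meet in Hs; auto.
  split; auto.
Qed.

End DefinableMeets.
End InductiveLeftEMonoid.

Theorem proposition6p2 (S : Type) (mul : S -> S -> S) (one : S)
  (E : S -> Prop) (meet dot : S -> S -> S) :
  inductive_left_E_monoid mul one E meet dot ->
  (* (ZS1) *)
  (forall s t e, E e -> dot (mul s t) e = dot s (dot t e)) /\
  (* (ZS2) *)
  (forall s e f, E e -> E f ->
     dot s (meet e f) = meet (dot s e) (dot (sup mul dot s e) f)) /\
  (* (ZS4) *)
  (forall s t e, E e ->
     sup mul dot (mul s t) e = mul (sup mul dot s (dot t e)) (sup mul dot t e)) /\
  (* (ZS3) iff definable meets *)
  ((forall s e f, E e -> E f ->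
      sup mul dot (sup mul dot s e) f = sup mul dot s (meet e f))
   <-> definable_meets mul E dot) /\
  (definable_meets mul E dot ->
     (* E x S is closed under otimes, which is associative *)
     (forall x y, in_ExS E x -> in_ExS E y -> in_ExS E (otimes mul meet dot x y)) /\
     (forall x y z, in_ExS E x -> in_ExS E y -> in_ExS E z ->
        otimes mul meet dot (otimes mul meet dot x y) z =
        otimes mul meet dot x (otimes mul meet dot y z)) /\
     (* Rest(E,S) is a subsemigroup, with multiplication the restriction of otimes *)
     (forall x y, in_Rest mul E x -> in_Rest mul E y ->
        in_Rest mul E (otimes mul meet dot x y) /\
        rest_mul mul meet dot x y = otimes mul meet dot x y) /\
     (* Ehat is a semilattice under otimes, isomorphic to (E, meet) via e |-> (e,e) *)
     (forall e f, E e -> E f ->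
        otimes mul meet dot (e, e) (f, f) = (meet e f, meet e f)) /\
     (forall x y, in_Ehat E x -> in_Ehat E y ->
        in_Ehat E (otimes mul meet dot x y) /\
        otimes mul meet dot x x = x /\
        otimes mul meet dot x y = otimes mul meet dot y x) /\
     (* subsemigroups that are left restriction semigroups with D(T) = Ehat *)
     (forall (T : S * S -> Prop) (D : S * S -> S * S),
        (forall x, T x -> in_ExS E x) ->
        (forall x y, T x -> T y -> T (otimes mul meet dot x y)) ->
        left_restriction_on T (otimes mul meet dot) D ->
        (forall x, (exists y, T y /\ x = D y) <-> in_Ehat E x) ->
        forall x, T x -> in_Rest mul E x)).
Proof.
  intro HS.
  split; [exact (dot_mul HS)|].
  split; [exact (dot_meet HS)|].
  split; [exact (sup_mul HS)|].
  split; [exact (sup_sup_iff_definable_meets HS)|].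
  intro HDM.
  split; [exact (otimes_ExS HS)|].
  split; [exact (otimes_assoc HS HDM)|].
  split; [exact (otimes_Rest HS HDM)|].
  split; [exact (otimes_diag HS HDM)|].
  split; [exact (Ehat_semilattice HS HDM)|].
  intros T D HT _ HLR HD.
  apply (left_restriction_in_Rest HS HDM T D HT HLR); intro x; apply HD.
Qed.
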